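(* Let $M$ be a $4$-dimensional manifold with local coordinates $(x^1,\dots,x^4)$, $e_i=\partial/\partial x^i$, and Riemannian metric $g$ with components \[(g_{ij})=\begin{pmatrix} A&B&C&B\\ B&A&B&C\\ C&B&A&B\\ B&C&B&A\end{pmatrix},\] $A,B,C$ smooth functions with $A>C>B>0$. Let $P$ be the almost product structure with component matrix having rows $(0,0,1,0),(0,0,0,1),(1,0,0,0),(0,1,0,0)$. Then $(M,g,P)$ belongs to the class $\overline{\mathcal{W}}_3$ if and only if \[A_4-C_2=C_4-A_2,\quad (A+C)(B_4-B_2)=2B(A_4-C_2),\quad A_3-C_1=C_3-A_1,\quad (A+C)(B_3-B_1)=2B(A_3-C_1),\] where $A_i=\partial A/\partial x^i$, $B_i=\partial B/\partial x^i$, $C_i=\partial C/\partial x^i$.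
   Context: Let $\nabla$ be the Levi-Civita connection of $g$, $F(x,y,z)=g((\nabla_xP)y,z)$, and $\theta(x)=g^{ij}F(e_i,e_j,x)$ with $(g^{ij})$ the inverse of $(g_{ij})$. The manifold $(M,g,P)$ belongs to the class $\overline{\mathcal{W}}_3$ (a basic class of Naveira's classification) if for all vector fields $x,y,z$: \[F(x,y,z)=\tfrac14\Big[\big(g(x,y)+g(x,Py)\big)\theta(z)+\big(g(x,z)+g(x,Pz)\big)\theta(y)\Big],\qquad \theta(Pz)=-\theta(z).\] *)

(* Local-coordinate formalization of a
   4-dimensional Riemannian almost product manifold (M,g,P) on a chart
   domain U (an open subset of R^4). *)
From HB Require Import structures.
From mathcomp Require Import all_boot all_order all_algebra.
From mathcomp Require Import all_classical all_reals all_analysis.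
Set Implicit Arguments. Unset Strict Implicit. Unset Printing Implicit Defensive.
Import Order.TTheory GRing.Theory Num.Theory.
Import numFieldNormedType.Exports.
Local Open Scope classical_set_scope.
Local Open Scope ring_scope.

Section Geo.
Variable R : realType.
Notation pt := 'rV[R]_4.

Definition coord (i : 'I_4) : pt := delta_mx 0 i.

Definition pd (f : pt -> R) (i : 'I_4) (p : pt) : R := 'D_(coord i) f p.

Fixpoint Ck (U : set pt) (n : nat) (f : pt -> R) : Prop :=
  match n with
  | 0 => {within U, continuous f}
  | n'.+1 => (forall p, U p -> differentiable f p) /\
             forall i, Ck U n' (pd f i)
  end.
Definition smooth_on (U : set pt) (f : pt -> R) : Prop := forall n, Ck U n f.

Definition gmat (A B C : pt -> R) (p : pt) : 'M[R]_4 :=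
  \matrix_(i, j) (if i == j then A p else if odd (i + j) then B p else C p).

(* almost product structure P (constant components, P^i_j = row i col j) *)
Definition Pmat : 'M[R]_4 :=
  \matrix_(i, j) (if ((i + 2) %% 4 == j)%N then 1 else 0).

Variables (A B C : pt -> R).
Let g := gmat A B C.
Let ginv p := invmx (g p).

Definition dg (p : pt) (l i j : 'I_4) : R := pd (fun q => g q i j) l p.

(* Christoffel symbols of the Levi-Civita connection:
   nabla_{e_i} e_j = sum_k Gamma^k_ij e_k *)
Definition Gamma (p : pt) (k i j : 'I_4) : R :=
  2^-1 * \sum_(l < 4) ginv p k l * (dg p i j l + dg p j i l - dg p l i j).

(* components of (nabla_{e_i} P) e_j = sum_k nablaP i j k e_k *)
Definition nablaP (p : pt) (i j k : 'I_4) : R :=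
  \sum_(l < 4) Pmat l j * Gamma p k i l - \sum_(l < 4) Pmat k l * Gamma p l i j.

Definition Fc (p : pt) (i j k : 'I_4) : R :=
  \sum_(m < 4) g p m k * nablaP p i j m.

Definition thetac (p : pt) (k : 'I_4) : R :=
  \sum_(i < 4) \sum_(j < 4) ginv p i j * Fc p i j k.

(* tensors evaluated on tangent vectors at p (components in the basis e_i) *)
Definition gval (p : pt) (x y : pt) : R :=
  \sum_(i < 4) \sum_(j < 4) x 0 i * y 0 j * g p i j.
Definition Pvec (y : pt) : pt := \row_k (\sum_(j < 4) Pmat k j * y 0 j).
Definition Fval (p : pt) (x y z : pt) : R :=
  \sum_(i < 4) \sum_(j < 4) \sum_(k < 4) x 0 i * y 0 j * z 0 k * Fc p i j k.
Definition thetaval (p : pt) (x : pt) : R := \sum_(k < 4) x 0 k * thetac p k.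

Definition in_W3bar (U : set pt) : Prop :=
  forall p, U p -> forall x y z : pt,
    Fval p x y z = 4^-1 * ((gval p x y + gval p x (Pvec y)) * thetaval p z
                          + (gval p x z + gval p x (Pvec z)) * thetaval p y)
    /\ thetaval p (Pvec z) = - thetaval p z.

End Geo.

(* In these coordinates g is a circulant matrix over Z/4 and P is the
   translation j |-> j + 2 of the indices, which preserves g.  Hence
   F_ijk = Gamma_{i,j+2,k} - Gamma_{i,j,k+2} (Christoffel symbols of the first
   kind), and the inverse metric is explicit.  Then
   (A - C) (theta_{k+2} + theta_k) = 2 (A_k + A_{k+2} - C_k - C_{k+2}), so
   theta o P = -theta is the first and third equation, while
   F(e_{k+1}, e_k, e_k) = B_{k+2} - B_k must equal B theta_k, which given the
   first equation is the second one.  Conversely the four equations give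
   theta_k = 2 (A_{k+2} - C_k) / (A + C), and the 64 component identities of
   the W3-bar condition are checked one by one; by multilinearity they are
   equivalent to the tensorial condition. *)

From Pilot Require Import Defs.
From HB Require Import structures.
From mathcomp Require Import all_boot all_order all_algebra.
From mathcomp Require Import all_classical all_reals all_analysis.
From mathcomp Require Import ring lra.
Import Order.TTheory GRing.Theory Num.Theory.
Import numFieldNormedType.Exports.
Local Open Scope classical_set_scope.
Local Open Scope ring_scope.
Set Implicit Arguments. Unset Strict Implicit. Unset Printing Implicit Defensive.

Lemma ord4P (P : 'I_4 -> Prop) : P 0 -> P 1 -> P 2 -> P 3 -> forall i, P i.
Proof.
move=> P0 P1 P2 P3 [[|[|[|[|n]]]] lt_i4] //.
- by rewrite (_ : Ordinal _ = 0) //; apply/val_inj.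
- by rewrite (_ : Ordinal _ = 1) //; apply/val_inj.
- by rewrite (_ : Ordinal _ = 2) //; apply/val_inj.
- by rewrite (_ : Ordinal _ = 3) //; apply/val_inj.
Qed.

Lemma sum_ord4 (V : nmodType) (F : 'I_4 -> V) :
  \sum_(i < 4) F i = F 0 + F 1 + F 2 + F 3.
Proof.
have F_val i j : val i = val j -> F i = F j by move=> /val_inj ->.
by rewrite !big_ord_recl big_ord0 addr0 !addrA; do 4?congr (_ + _); apply: F_val.
Qed.

(* [field] and [ring] compare distinct [pd] atoms by unfolding the derivative,
   which is prohibitively slow: the derivatives are abstracted first. *)
Ltac generalize_pd A B C p :=
  move: (pd A 0 p) (pd A 1 p) (pd A 2 p) (pd A 3 p)
        (pd B 0 p) (pd B 1 p) (pd B 2 p) (pd B 3 p)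
        (pd C 0 p) (pd C 1 p) (pd C 2 p) (pd C 3 p).

Definition shift2 (i : 'I_4) : 'I_4 := i + 2.

Lemma shift2K : involutive shift2.
Proof. by elim/ord4P; apply/val_inj. Qed.

Lemma shift2E : (shift2 0 = 2) * (shift2 1 = 3) * (shift2 2 = 0) * (shift2 3 = 1).
Proof. by do !split; apply/val_inj. Qed.

Section Metric.
Variables (R : realType) (A B C : 'rV[R]_4 -> R).
Local Notation g := (gmat A B C).

Lemma gmat_sym p i j : g p i j = g p j i.
Proof. by rewrite !mxE eq_sym addnC. Qed.

Lemma gmat_shift2 p i j : g p (shift2 i) j = g p i (shift2 j).
Proof. by elim/ord4P: i; elim/ord4P: j; rewrite !mxE. Qed.

Lemma Pmat_shift2 i j : Pmat R i j = (shift2 i == j)%:R.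
Proof. by elim/ord4P: i; elim/ord4P: j; rewrite mxE. Qed.

Lemma sum_Pmat_col j (f : 'I_4 -> R) : \sum_l Pmat R l j * f l = f (shift2 j).
Proof.
by elim/ord4P: j; rewrite sum_ord4 !Pmat_shift2 /= !(mul0r, mul1r, addr0, add0r);
  congr f; apply/val_inj.
Qed.

Lemma sum_Pmat_row k (f : 'I_4 -> R) : \sum_l Pmat R k l * f l = f (shift2 k).
Proof.
by elim/ord4P: k; rewrite sum_ord4 !Pmat_shift2 /= !(mul0r, mul1r, addr0, add0r);
  congr f; apply/val_inj.
Qed.

Lemma nablaPE p i j k :
  nablaP A B C p i j k = Gamma A B C p k i (shift2 j) - Gamma A B C p (shift2 k) i j.
Proof. by rewrite /nablaP sum_Pmat_col sum_Pmat_row. Qed.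

Lemma dgE p l i j : dg A B C p l i j =
  if i == j then pd A l p else if odd (i + j) then pd B l p else pd C l p.
Proof.
rewrite /dg; have -> : (fun q => g q i j) =
    if i == j then A else if odd (i + j) then B else C.
  by apply/funext => q; rewrite mxE; case: (i == j) => //; case: (odd _).
by case: (i == j) => //; case: (odd _).
Qed.

Definition christoffel p i j k :=
  2^-1 * (dg A B C p i j k + dg A B C p j i k - dg A B C p k i j).

Lemma sum_gmat_Gamma p i j k : g p \in unitmx ->
  \sum_m g p m k * Gamma A B C p m i j = christoffel p i j k.
Proof.
move=> g_unit; rewrite /Gamma /christoffel.
under eq_bigr do rewrite mulrCA mulr_sumr.
rewrite -mulr_sumr exchange_big /=; congr (_ * _).
under eq_bigr do (under eq_bigr do rewrite mulrA; rewrite -mulr_suml).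
have g_ginv l : \sum_m g p m k * invmx (g p) m l = (k == l)%:R.
  have := congr1 (fun M : 'M[R]_4 => M k l) (mulmxV g_unit).
  rewrite /= [X in X = _]mxE [X in _ = X]mxE => <-.
  by apply: eq_bigr => m _; rewrite gmat_sym.
under eq_bigr do rewrite g_ginv.
rewrite (bigD1 k) //= eqxx mul1r big1 ?addr0 // => l /negbTE.
by rewrite eq_sym => ->; rewrite mul0r.
Qed.

Lemma Fc_christoffel p i j k : g p \in unitmx ->
  Fc A B C p i j k = christoffel p i (shift2 j) k - christoffel p i j (shift2 k).
Proof.
move=> g_unit; rewrite /Fc.
under eq_bigr do rewrite nablaPE mulrBr.
rewrite sumrB sum_gmat_Gamma //; congr (_ - _).
rewrite (reindex_inj (can_inj shift2K)) /= -sum_gmat_Gamma //.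
by apply: eq_bigr => m _; rewrite gmat_shift2 shift2K.
Qed.

(* [g] is circulant over Z/4 with eigenvalues A + 2B + C, A - 2B + C and A - C
   (twice); its inverse is the circulant with the inverse eigenvalues. *)
Definition ginvA q :=
  4^-1 * ((A q + 2 * B q + C q)^-1 + (A q - 2 * B q + C q)^-1 + 2 * (A q - C q)^-1).
Definition ginvB q := 4^-1 * ((A q + 2 * B q + C q)^-1 - (A q - 2 * B q + C q)^-1).
Definition ginvC q :=
  4^-1 * ((A q + 2 * B q + C q)^-1 + (A q - 2 * B q + C q)^-1 - 2 * (A q - C q)^-1).

Definition W3bar_components p : Prop :=
  (forall i j k, Fc A B C p i j k =
     4^-1 * ((g p i j + g p i (shift2 j)) * thetac A B C p k
             + (g p i k + g p i (shift2 k)) * thetac A B C p j))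
  /\ forall k, thetac A B C p (shift2 k) = - thetac A B C p k.

Definition W3bar_eqs p k : Prop :=
  pd A (shift2 k) p - pd C k p = pd C (shift2 k) p - pd A k p
  /\ (A p + C p) * (pd B (shift2 k) p - pd B k p) = 2 * B p * (pd A (shift2 k) p - pd C k p).

Lemma gmat_succ p k : g p (k + 1) k = B p.
Proof. by elim/ord4P: k; rewrite mxE. Qed.

Lemma gmat_succ_shift2 p k : g p (k + 1) (shift2 k) = B p.
Proof. by elim/ord4P: k; rewrite mxE. Qed.

Lemma Fc_succ_diag p k : g p \in unitmx ->
  Fc A B C p (k + 1) k k = pd B (shift2 k) p - pd B k p.
Proof.
move=> g_unit; rewrite Fc_christoffel // /christoffel !dgE.
move: (pd A (k + 1) p) (pd B (k + 1) p) (pd C (k + 1) p) => ? ? ?.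
elim/ord4P: k => /=; rewrite !shift2E; generalize_pd A B C p => *; by field.
Qed.

Section AtPoint.
Variable p : 'rV[R]_4.
Hypotheses (AC_neq0 : A p - C p != 0)
  (lam1_neq0 : A p + 2 * B p + C p != 0) (lam2_neq0 : A p - 2 * B p + C p != 0).

Lemma gmat_mulV : g p *m gmat ginvA ginvB ginvC p = 1%:M.
Proof.
apply/matrixP => i j; elim/ord4P: i; elim/ord4P: j;
  rewrite !mxE sum_ord4 !mxE /= /ginvA /ginvB /ginvC.
all: by field; rewrite AC_neq0 lam1_neq0 lam2_neq0.
Qed.

Lemma gmat_unit : g p \in unitmx.
Proof. by case: (mulmx1_unit gmat_mulV). Qed.

Lemma invmx_gmat : invmx (g p) = gmat ginvA ginvB ginvC p.
Proof.
by rewrite -[invmx _]mulmx1 -gmat_mulV mulmxA mulVmx ?gmat_unit ?mul1mx.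
Qed.

Lemma thetacE k : thetac A B C p k =
  2 * ginvA p * (pd A (shift2 k) p - pd C k p)
  + 2 * ginvC p * (pd C (shift2 k) p - pd A k p)
  + 4 * ginvB p * (pd B (shift2 k) p - pd B k p).
Proof.
rewrite /thetac invmx_gmat.
under eq_bigr do under eq_bigr do rewrite Fc_christoffel ?gmat_unit // /christoffel !dgE.
rewrite !sum_ord4; elim/ord4P: k; rewrite !mxE /= !shift2E.
all: move: (ginvA p) (ginvB p) (ginvC p); generalize_pd A B C p; move=> *; by field.
Qed.

Lemma thetac_shift2_add k :
  (A p - C p) * (thetac A B C p (shift2 k) + thetac A B C p k) =
  2 * (pd A k p + pd A (shift2 k) p - (pd C k p + pd C (shift2 k) p)).
Proof.
rewrite !thetacE shift2K /ginvA /ginvB /ginvC.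
move: (pd A k p) (pd A (shift2 k) p) (pd B k p) (pd B (shift2 k) p)
  (pd C k p) (pd C (shift2 k) p) => *.
by field; rewrite AC_neq0 lam1_neq0 lam2_neq0.
Qed.

Lemma thetac_balanced k : pd A (shift2 k) p - pd C k p = pd C (shift2 k) p - pd A k p ->
  (A p + 2 * B p + C p) * (A p - 2 * B p + C p) * thetac A B C p k =
  2 * (A p + C p) * (pd A (shift2 k) p - pd C k p) - 4 * B p * (pd B (shift2 k) p - pd B k p).
Proof.
rewrite thetacE /ginvA /ginvB /ginvC.
move: (pd A k p) (pd A (shift2 k) p) (pd B k p) (pd B (shift2 k) p)
  (pd C k p) (pd C (shift2 k) p) => ak ak' bk bk' ck ck' e1.
rewrite (_ : ck' = ak' - ck + ak) ?e1 ?subrK //.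
by field; rewrite AC_neq0 lam1_neq0 lam2_neq0.
Qed.

Hypothesis ApC_neq0 : A p + C p != 0.

Lemma W3bar_eqs_of_components k : W3bar_components p -> W3bar_eqs p k.
Proof.
case=> HF Htheta.
have e1 : pd A (shift2 k) p - pd C k p = pd C (shift2 k) p - pd A k p.
  have := thetac_shift2_add k; rewrite Htheta addNr mulr0.
  move: (pd A k p) (pd A (shift2 k) p) (pd C k p) (pd C (shift2 k) p) => *; lra.
split=> //.
have := HF (k + 1) k k; rewrite Fc_succ_diag ?gmat_unit // gmat_succ gmat_succ_shift2.
have := thetac_balanced e1.
move: (thetac A B C p k) (pd A (shift2 k) p - pd C k p) (pd B (shift2 k) p - pd B k p)
  => th u w Hth Hw.
(* (A + C)^2 = (A + 2B + C) (A - 2B + C) + 4 B^2 *)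
have : (A p + C p) * ((A p + C p) * w - 2 * B p * u) = 0.
  rewrite (_ : _ * _ = (A p + 2 * B p + C p) * (A p - 2 * B p + C p) * (w - B p * th)
                      + B p * ((A p + 2 * B p + C p) * (A p - 2 * B p + C p) * th
                               - (2 * (A p + C p) * u - 4 * B p * w))); last by ring.
  by rewrite Hth subrr mulr0 addr0 Hw; field.
by move/eqP; rewrite mulf_eq0 (negbTE ApC_neq0) subr_eq0 => /eqP.
Qed.

Lemma thetac_of_eqs k : W3bar_eqs p k ->
  thetac A B C p k = 2 * (pd A (shift2 k) p - pd C k p) / (A p + C p).
Proof.
case=> e1 e2; apply: (mulfI (mulf_neq0 lam1_neq0 lam2_neq0)).
rewrite thetac_balanced //; move: e2.
move: (pd A (shift2 k) p - pd C k p) (pd B (shift2 k) p - pd B k p) => u w e2.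
rewrite (_ : w = 2 * B p * u / (A p + C p)); first by field.
by rewrite -e2; field.
Qed.

Lemma W3bar_eqs_subst k : W3bar_eqs p k ->
  pd C (shift2 k) p = pd A (shift2 k) p - pd C k p + pd A k p
  /\ pd B (shift2 k) p = pd B k p + 2 * B p * (pd A (shift2 k) p - pd C k p) / (A p + C p).
Proof.
rewrite /W3bar_eqs; move: (pd A k p) (pd A (shift2 k) p) (pd B k p) (pd B (shift2 k) p)
  (pd C k p) (pd C (shift2 k) p) => ak ak' bk bk' ck ck' [e1 e2].
split; first by rewrite e1 subrK.
by rewrite -e2; field.
Qed.

Lemma W3bar_components_of_eqs : (forall k, W3bar_eqs p k) -> W3bar_components p.
Proof.
move=> eqs; have thetaE k := thetac_of_eqs (eqs k).
split=> [i j k|k]; last first.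
  rewrite !thetaE shift2K; have [e1 _] := eqs k; move: e1.
  move: (pd A k p) (pd A (shift2 k) p) (pd C k p) (pd C (shift2 k) p) => ak ak' ck ck' e1.
  by rewrite e1; field.
have [C2 B2] := W3bar_eqs_subst (eqs 0); have [C3 B3] := W3bar_eqs_subst (eqs 1).
rewrite !shift2E in C2 B2 C3 B3.
rewrite Fc_christoffel ?gmat_unit // /christoffel !dgE !thetaE.
elim/ord4P: i; elim/ord4P: j; elim/ord4P: k; rewrite !mxE /= !shift2E ?C2 ?C3 ?B2 ?B3;
  generalize_pd A B C p => *; by field.
Qed.

Lemma W3bar_eqs_shift2 k : W3bar_eqs p k -> W3bar_eqs p (shift2 k).
Proof.
rewrite /W3bar_eqs shift2K; move: (pd A k p) (pd A (shift2 k) p) (pd B k p)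
  (pd B (shift2 k) p) (pd C k p) (pd C (shift2 k) p) => ak ak' bk bk' ck ck' [e1 e2].
split; first lra.
have -> : ak - ck' = - (ak' - ck) by lra.
by rewrite mulrN -e2 -mulrN opprB.
Qed.

Lemma W3bar_componentsE : W3bar_components p <-> W3bar_eqs p 1 /\ W3bar_eqs p 0.
Proof.
split=> [comps | [eqs1 eqs0]]; first by split; apply: W3bar_eqs_of_components.
apply: W3bar_components_of_eqs; elim/ord4P.
- exact: eqs0.
- exact: eqs1.
- by rewrite -shift2E.1.1.1; apply: W3bar_eqs_shift2.
- by rewrite -shift2E.1.1.2; apply: W3bar_eqs_shift2.
Qed.

End AtPoint.

Lemma sum_coord i (f : 'I_4 -> R) : \sum_l Defs.coord R i 0 l * f l = f i.
Proof.
rewrite (bigD1 i) //= mxE !eqxx mul1r big1 ?addr0 // => l /negbTE l_neq_i.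
by rewrite mxE l_neq_i andbF mul0r.
Qed.

Lemma FvalE p x y z : Fval A B C p x y z =
  \sum_i x 0 i * \sum_j y 0 j * \sum_k z 0 k * Fc A B C p i j k.
Proof.
apply: eq_bigr => i _; rewrite mulr_sumr; apply: eq_bigr => j _.
by rewrite !mulr_sumr; apply: eq_bigr => k _; rewrite !mulrA.
Qed.

Lemma gvalE p x y : gval A B C p x y = \sum_i x 0 i * \sum_j y 0 j * g p i j.
Proof.
by apply: eq_bigr => i _; rewrite mulr_sumr; apply: eq_bigr => j _; rewrite mulrA.
Qed.

Lemma gval_PvecE p x y :
  gval A B C p x (Pvec y) = \sum_i x 0 i * \sum_j y 0 j * g p i (shift2 j).
Proof.
apply: eq_bigr => i _; rewrite mulr_sumr (reindex_inj (can_inj shift2K)).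
by apply: eq_bigr => j _; rewrite mxE sum_Pmat_row shift2K mulrA.
Qed.

Lemma thetaval_PvecE p z :
  thetaval A B C p (Pvec z) = \sum_k z 0 k * thetac A B C p (shift2 k).
Proof.
rewrite /thetaval (reindex_inj (can_inj shift2K)).
by apply: eq_bigr => k _; rewrite mxE sum_Pmat_row shift2K.
Qed.

Lemma in_W3barE U : in_W3bar A B C U <-> forall p, U p -> W3bar_components p.
Proof.
split=> [W p Up | comps p Up x y z].
  split=> [i j k | k].
    have [+ _] := W p Up (Defs.coord R i) (Defs.coord R j) (Defs.coord R k).
    by rewrite FvalE !gval_PvecE !gvalE /thetaval !sum_coord.
  have [_ +] := W p Up 0 0 (Defs.coord R k).
  by rewrite thetaval_PvecE /thetaval !sum_coord.
have [HF Htheta] := comps p Up; split.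
  rewrite FvalE !gval_PvecE !gvalE /thetaval.
  under eq_bigr do under eq_bigr do under eq_bigr do rewrite HF.
  move: (g p) (thetac A B C p) => G theta.
  rewrite !sum_ord4 !shift2E; ring.
rewrite thetaval_PvecE /thetaval -sumrN.
by apply: eq_bigr => k _; rewrite Htheta mulrN.
Qed.

End Metric.

Theorem corollary3p6 (R : realType) (U : set 'rV[R]_4)
  (A B C : 'rV[R]_4 -> R) :
  open U ->
  smooth_on U A -> smooth_on U B -> smooth_on U C ->
  (forall p, U p -> A p > C p /\ C p > B p /\ B p > 0) ->
  (in_W3bar A B C U <->
   forall p, U p ->
     [/\ pd A 3 p - pd C 1 p = pd C 3 p - pd A 1 p,
         (A p + C p) * (pd B 3 p - pd B 1 p) = 2 * B p * (pd A 3 p - pd C 1 p),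
         pd A 2 p - pd C 0 p = pd C 2 p - pd A 0 p
       & (A p + C p) * (pd B 2 p - pd B 0 p) = 2 * B p * (pd A 2 p - pd C 0 p)]).
Proof.
move=> _ _ _ _ ACB.
have pointE p : U p -> W3bar_components A B C p <-> W3bar_eqs A B C p 1 /\ W3bar_eqs A B C p 0.
  move=> /ACB [AC [CB B0]].
  by apply: W3bar_componentsE; apply/eqP; lra.
rewrite /W3bar_eqs !shift2E in pointE.
split=> [/in_W3barE W p Up | eqs].
  by have [[? ?] [? ?]] := (pointE p Up).1 (W p Up).
apply/in_W3barE => p Up; apply/(pointE p Up).
by have [? ? ? ?] := eqs p Up.
Qed.
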